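(* Let $F=\mathrm{id}_{K_{\mathrm{cmn}}}\otimes(R\otimes_{R_{\mathrm p}}F_{\mathrm p}):\widehat{\gamma}_{\mathrm{par}}\to\widehat{\gamma}_{\mathrm{vir}}$ and $G=\mathrm{id}_{K_{\mathrm{cmn}}}\otimes(R\otimes_{R_{\mathrm p}}G_{\mathrm p}):\widehat{\gamma}_{\mathrm{vir}}\to\widehat{\gamma}_{\mathrm{hor}}$ be the saddle morphisms, where $F_{\mathrm p}$ is given on the even part by $\begin{pmatrix}0&1\\ q_2^2-q_1^2C&0\end{pmatrix}$ and on the odd part by $\begin{pmatrix}q_2&-q_1\\ q_1C&-q_2\end{pmatrix}$, and $G_{\mathrm p}$ is given on the even part by $\begin{pmatrix}0&1\\ p_2^2-p_1^2C&0\end{pmatrix}$ and on the odd part by $\begin{pmatrix}p_2&-p_1\\ p_1C&-p_2\end{pmatrix}$. Then the composition is null-homotopic: $G\circ F\simeq 0$.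
   Context: Fix $N\ge1$, $w(x)=x^{2N+1}$, $W(x,y)=xy^2+x^{2N+1}$, iterated divided differences $w(x_1,\dots,x_n)=\frac{w(x_1,\dots,x_{n-2},x_{n-1})-w(x_1,\dots,x_{n-2},x_n)}{x_{n-1}-x_n}$. $R=\mathbb{Q}[x_1,\dots,x_4,y_1,\dots,y_4]$, $W_4=\sum W(x_i,y_i)$. Matrix factorizations of $V$: $\mathbb{Z}/2$-graded free modules with odd $D$, $D^2=V$; a morphism is null-homotopic ($\simeq0$) if it equals $DX+XD$ for some odd $R$-linear $X$. $A(i,j)$ is the Koszul matrix factorization (tensor product over $R$ of $Re_0\oplus Re_1$, $De_0=be_1$, $De_1=ae_0$ for each row $(a\mid b)$) with rows $(y_j+y_i\mid x_j(y_j-y_i))$, $(x_j+x_i\mid y_i^2+w(-x_i,x_j))$; $\widehat{\gamma}_{\mathrm{par}}=A(1,3)\otimes A(2,4)$, $\widehat{\gamma}_{\mathrm{vir}}=A(1,4)\otimes A(2,3)$, $\widehat{\gamma}_{\mathrm{hor}}=A(1,2)\otimes A(3,4)$. $R_{\mathrm p}=\mathbb{Q}[p_1,p_2,q_1,q_2,r_1,r_2,C]$, $W_{4,\mathrm p}=p_1q_2r_2+q_1p_2r_2+r_1p_2q_2+p_1q_1r_1C$. Proper matrix factorizations, each of the form $R_{\mathrm p}^2$ (odd) $\xrightarrow{P}$ $R_{\mathrm p}^2$ (even) $\xrightarrow{Q}$ $R_{\mathrm p}^2$ (odd): $\widehat{\gamma}_{\mathrm{par,p}}$ with $P=\begin{pmatrix}p_2&p_1\\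 q_2r_2+q_1r_1C&-(q_2r_1+q_1r_2)\end{pmatrix}$, $Q=\begin{pmatrix}q_1r_2+q_2r_1&p_1\\ q_2r_2+q_1r_1C&-p_2\end{pmatrix}$; $\widehat{\gamma}_{\mathrm{vir,p}}$ with $P=\begin{pmatrix}r_2&r_1\\ p_2q_2+p_1q_1C&-(p_1q_2+p_2q_1)\end{pmatrix}$, $Q=\begin{pmatrix}p_1q_2+p_2q_1&r_1\\ p_2q_2+p_1q_1C&-r_2\end{pmatrix}$; $\widehat{\gamma}_{\mathrm{hor,p}}$ with $P=\begin{pmatrix}q_2&q_1\\ p_2r_2+p_1r_1C&-(p_1r_2+p_2r_1)\end{pmatrix}$, $Q=\begin{pmatrix}p_1r_2+p_2r_1&q_1\\ p_2r_2+p_1r_1C&-q_2\end{pmatrix}$. $\phi_{\mathrm p}:R_{\mathrm p}\to R$: $p_1\mapsto x_2+x_4$, $q_1\mapsto x_3+x_4$, $r_1\mapsto x_1+x_4$, $p_2\mapsto y_2+y_4$, $q_2\mapsto y_3+y_4$, $r_2\mapsto y_1+y_4$, $C\mapsto w(x_1,x_2,-x_3,x_4)+w(x_1,-x_1,x_2,x_4)+w(x_1,-x_1,-x_2,x_4)$; $R\otimes_{R_{\mathrm p}}$ is base change along $\phi_{\mathrm p}$. $K_{\mathrm{cmn}}$ is the Koszul matrix factorization with rows $(x_1+x_2+x_3+x_4\mid A)$, $(y_1+\dots+y_4\mid B)$, $A=-(y_3+y_4)(y_1+y_2+y_4)-y_1y_2+w(-x_1,x_3)+(x_2+x_4)w(x_1,x_2,-x_3)-(x_2+x_4)(x_1+x_4)(w(x_1,-x_1,x_2,x_4)+w(x_1,-x_1,-x_2,x_4))$,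 $B=x_1y_1+x_2y_2+x_3y_3-x_4y_4$; $K_{\mathrm{cmn}}\otimes_R(R\otimes_{R_{\mathrm p}}\widehat{\gamma}_{\bullet,\mathrm p})\cong\widehat{\gamma}_\bullet$ for $\bullet\in\{\mathrm{par},\mathrm{vir},\mathrm{hor}\}$, and $F,G$ are regarded as morphisms between the $\widehat{\gamma}_\bullet$ via these isomorphisms. *)

From HB Require Import structures.
From mathcomp Require Import all_boot all_order all_algebra.
From mathcomp Require Import mpoly.
Set Implicit Arguments. Unset Strict Implicit. Unset Printing Implicit Defensive.
Import GRing.Theory.
Local Open Scope ring_scope.

(* R = Q[x1..x4,y1..y4]: variables 'X_0..'X_3 are x1..x4, 'X_4..'X_7 are y1..y4 *)
Definition R := {mpoly rat[8]}.
Definition Rp := {mpoly rat[7]}.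

Definition xv (i : nat) : R := 'X_(inord i.-1).
Definition yv (i : nat) : R := 'X_(inord (i + 3)).

Definition p1 : Rp := 'X_(inord 0).
Definition p2 : Rp := 'X_(inord 1).
Definition q1 : Rp := 'X_(inord 2).
Definition q2 : Rp := 'X_(inord 3).
Definition r1 : Rp := 'X_(inord 4).
Definition r2 : Rp := 'X_(inord 5).
Definition Cp : Rp := 'X_(inord 6).

(* complete homogeneous symmetric polynomial h_d(s) evaluated in R *)
Fixpoint hcomp (d : nat) (s : seq R) : R :=
  match s with
  | [::] => (d == 0%N)%:R
  | a :: s' => \sum_(k < d.+1) a ^+ k * hcomp (d - k) s'
  end.

(* iterated divided difference of w(x) = x^(2N+1):
   w(a_1,...,a_n) = h_(2N+2-n)(a_1,...,a_n)  (closed form) *)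
Definition wdd (N : nat) (s : seq R) : R := hcomp ((2 * N + 2) - size s) s.

(* a graded free module of rank rk, basis vector i has parity par i
   (false = even, true = odd); dif is the matrix of D acting on columns *)
Record gmf := GMF { rk : nat; par : 'I_rk -> bool; dif : 'M[R]_rk }.
Arguments par : clear implicits.
Arguments dif : clear implicits.

Lemma tidx1_proof m n (k : 'I_(m * n)) : (k %/ n < m)%N.
Proof. case: k => k /=; case: n => [|n]; first by rewrite muln0. by rewrite ltn_divLR. Qed.
Lemma tidx2_proof m n (k : 'I_(m * n)) : (k %% n < n)%N.
Proof. by case: k => k /=; case: n => [|n]; rewrite ?muln0 // ltn_mod. Qed.
Definition tidx1 m n (k : 'I_(m * n)) : 'I_m := Ordinal (tidx1_proof k).
Definition tidx2 m n (k : 'I_(m * n)) : 'I_n := Ordinal (tidx2_proof k).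

(* tensor product: D(u (x) v) = Du (x) v + (-1)^|u| u (x) Dv *)
Definition tens (M N : gmf) : gmf :=
  @GMF (rk M * rk N)
    (fun k => par M (tidx1 k) (+) par N (tidx2 k))
    (\matrix_(k, l)
       (dif M (tidx1 k) (tidx1 l) * (tidx2 k == tidx2 l)%:R
        + (-1) ^+ par M (tidx1 l) * (tidx1 k == tidx1 l)%:R
            * dif N (tidx2 k) (tidx2 l))).

Definition idtens (m n n' : nat) (f : 'M[R]_(n', n)) : 'M[R]_(m * n', m * n) :=
  \matrix_(k, l) ((tidx1 k == tidx1 l)%:R * f (tidx2 k) (tidx2 l)).

Definition kos (a b : R) : gmf :=
  @GMF 2 (fun i => i == 1 :> nat)
    (\matrix_(i, j) (if (i == 0 :> nat) && (j == 1 :> nat) then a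
                     else if (i == 1 :> nat) && (j == 0 :> nat) then b else 0)).

Definition nullhtp (M N : gmf) (f : 'M[R]_(rk N, rk M)) : Prop :=
  exists X : 'M[R]_(rk N, rk M),
    (forall i j, par N i = par M j -> X i j = 0) /\
    f = dif N *m X + X *m dif M.
Arguments nullhtp : clear implicits.

Definition phi_p (N : nat) : 7.-tuple R :=
  [tuple xv 2 + xv 4; yv 2 + yv 4; xv 3 + xv 4; yv 3 + yv 4;
         xv 1 + xv 4; yv 1 + yv 4;
         wdd N [:: xv 1; xv 2; - xv 3; xv 4] + wdd N [:: xv 1; - xv 1; xv 2; xv 4]
         + wdd N [:: xv 1; - xv 1; - xv 2; xv 4]].

(* base change R (x)_{R_p} - along phi_p *)
Definition bc (N : nat) (m n : nat) (A : 'M[Rp]_(m, n)) : 'M[R]_(m, n) :=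
  map_mx (comp_mpoly (phi_p N)) A.

Definition mx2 (a b c d : Rp) : 'M[Rp]_2 :=
  \matrix_(i, j) (if i == 0 :> nat then (if j == 0 :> nat then a else b)
                  else (if j == 0 :> nat then c else d)).

(* proper MF R_p^2 (odd) --P--> R_p^2 (even) --Q--> R_p^2 (odd), base changed;
   basis: indices 0,1 even, 2,3 odd *)
Definition pmf (N : nat) (P Q : 'M[Rp]_2) : gmf :=
  @GMF 4 (fun i => (2 <= i)%N) (bc N (block_mx 0 P Q 0 : 'M[Rp]_(2 + 2))).

Definition gpar_p (N : nat) : gmf :=
  pmf N (mx2 p2 p1 (q2 * r2 + q1 * r1 * Cp) (- (q2 * r1 + q1 * r2)))
        (mx2 (q1 * r2 + q2 * r1) p1 (q2 * r2 + q1 * r1 * Cp) (- p2)).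
Definition gvir_p (N : nat) : gmf :=
  pmf N (mx2 r2 r1 (p2 * q2 + p1 * q1 * Cp) (- (p1 * q2 + p2 * q1)))
        (mx2 (p1 * q2 + p2 * q1) r1 (p2 * q2 + p1 * q1 * Cp) (- r2)).
Definition ghor_p (N : nat) : gmf :=
  pmf N (mx2 q2 q1 (p2 * r2 + p1 * r1 * Cp) (- (p1 * r2 + p2 * r1)))
        (mx2 (p1 * r2 + p2 * r1) q1 (p2 * r2 + p1 * r1 * Cp) (- q2)).

Definition Acmn (N : nat) : R :=
  - (yv 3 + yv 4) * (yv 1 + yv 2 + yv 4) - yv 1 * yv 2 + wdd N [:: - xv 1; xv 3]
  + (xv 2 + xv 4) * wdd N [:: xv 1; xv 2; - xv 3]
  - (xv 2 + xv 4) * (xv 1 + xv 4)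
      * (wdd N [:: xv 1; - xv 1; xv 2; xv 4] + wdd N [:: xv 1; - xv 1; - xv 2; xv 4]).
Definition Bcmn : R := xv 1 * yv 1 + xv 2 * yv 2 + xv 3 * yv 3 - xv 4 * yv 4.

Definition Kcmn (N : nat) : gmf :=
  tens (kos (xv 1 + xv 2 + xv 3 + xv 4) (Acmn N)) (kos (yv 1 + yv 2 + yv 3 + yv 4) Bcmn).

Definition gpar N := tens (Kcmn N) (gpar_p N).
Definition gvir N := tens (Kcmn N) (gvir_p N).
Definition ghor N := tens (Kcmn N) (ghor_p N).

Definition pmor (N : nat) (E O : 'M[Rp]_2) : 'M[R]_4 :=
  bc N (block_mx E 0 0 O : 'M[Rp]_(2 + 2)).

Definition Fp_mor N := pmor N (mx2 0 1 (q2 ^+ 2 - q1 ^+ 2 * Cp) 0) (mx2 q2 (- q1) (q1 * Cp) (- q2)).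
Definition Gp_mor N := pmor N (mx2 0 1 (p2 ^+ 2 - p1 ^+ 2 * Cp) 0) (mx2 p2 (- p1) (p1 * Cp) (- p2)).

Definition Fmor N : 'M[R]_(rk (gvir N), rk (gpar N)) := idtens 4 (Fp_mor N).
Definition Gmor N : 'M[R]_(rk (ghor N), rk (gvir N)) := idtens 4 (Gp_mor N).

From mathcomp Require Import all_boot all_order all_algebra.
From mathcomp Require Import mpoly mxtens ring.
Set Implicit Arguments. Unset Strict Implicit. Unset Printing Implicit Defensive.
Import GRing.Theory.
Local Open Scope ring_scope.

(* With the grading operator eps_M = diag((-1)^|e_i|), the differential of
   M (x) N is D_M (x) 1 + eps_M (x) D_N, and id_K (x) f is 1 (x) f.  If
   f = D_Q H + H D_P, then eps_K (x) H is a homotopy for id_K (x) f, because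
   D_K anticommutes with eps_K and eps_K^2 = 1.  So it suffices to show that
   G_p F_p is null-homotopic over R_p before base change; an explicit
   homotopy is given in the proof of the theorem.  It works for every value
   of C. *)

Lemma tidx1E m n (k : 'I_(m * n)) : tidx1 k = (mxtens_unindex k).1.
Proof. exact: val_inj. Qed.

Lemma tidx2E m n (k : 'I_(m * n)) : tidx2 k = (mxtens_unindex k).2.
Proof. exact: val_inj. Qed.

Lemma tensmxDl (S : pzRingType) m n p q (A B : 'M[S]_(m, n)) (C : 'M[S]_(p, q)) :
  (A + B) *t C = A *t C + B *t C.
Proof. by apply/matrixP => i j; rewrite !mxE mulrDl. Qed.

Lemma tensmxDr (S : pzRingType) m n p q (A : 'M[S]_(m, n)) (B C : 'M[S]_(p, q)) :
  A *t (B + C) = A *t B + A *t C.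
Proof. by apply/matrixP => i j; rewrite !mxE mulrDr. Qed.

Lemma idtens_tensmx m n n' (f : 'M[R]_(n', n)) : idtens m f = 1%:M *t f.
Proof. by apply/matrixP => k l; rewrite !mxE !tidx1E !tidx2E. Qed.

Lemma idtens_mul m n1 n2 n3 (f : 'M[R]_(n2, n1)) (g : 'M[R]_(n3, n2)) :
  idtens m g *m idtens m f = idtens m (g *m f).
Proof. by rewrite !idtens_tensmx tensmx_mul mulmx1. Qed.

Definition grading (M : gmf) : 'M[R]_(rk M) := diag_mx (\row_i (-1) ^+ par M i).

Definition odd_dif (M : gmf) : Prop := grading M *m dif M + dif M *m grading M = 0.

Lemma grading_sqr M : grading M *m grading M = 1.
Proof. by apply/matrixP => i j; rewrite mulmx_diag !mxE -signr_addb addbb. Qed.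

Lemma par_tens M N i j : par (tens M N) (mxtens_index (i, j)) = par M i (+) par N j.
Proof. by rewrite /= tidx1E tidx2E mxtens_indexK. Qed.

Lemma grading_tens M N : grading (tens M N) = grading M *t grading N.
Proof.
apply/matrixP => k l.
case: (mxtens_indexP k) => i j; case: (mxtens_indexP l) => i' j'.
rewrite tensmxE !mxE par_tens signr_addb (can_eq (@mxtens_indexK _ _)) xpair_eqE.
by case: (i == i'); case: (j == j'); rewrite ?mulr0n ?mulr1n ?mulr0 ?mul0r.
Qed.

Lemma dif_tens M N : dif (tens M N) = dif M *t 1%:M + grading M *t dif N.
Proof.
apply/matrixP => k l.
case: (mxtens_indexP k) => i j; case: (mxtens_indexP l) => i' j'.
rewrite !mxE !tidx1E !tidx2E !mxtens_indexK /=.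
by have [->|_] := eqVneq i i'; rewrite ?mulr1n ?mulr1 ?mulr0n ?mulr0 ?mul0r.
Qed.

Lemma kos_odd a b : odd_dif (kos a b).
Proof.
apply/matrixP => i j; rewrite mul_diag_mx mul_mx_diag !mxE.
by case: i => [[|[|//]] ?]; case: j => [[|[|//]] ?]; rewrite /= ?expr1 ?expr0;
  rewrite ?mulr0 ?mul0r ?addr0 ?mul1r ?mulr1 ?mulN1r ?mulrN1 ?addNr ?subrr.
Qed.

Lemma tens_odd M N : odd_dif M -> odd_dif N -> odd_dif (tens M N).
Proof.
rewrite /odd_dif grading_tens dif_tens => oddM oddN.
rewrite mulmxDl mulmxDr !tensmx_mul !mulmx1 !mul1mx addrACA.
by rewrite -tensmxDl -tensmxDr oddM oddN tens0mx tensmx0 addr0.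
Qed.

Lemma nullhtp_idtens (K P Q : gmf) (f : 'M[R]_(rk Q, rk P)) :
  odd_dif K -> nullhtp P Q f -> nullhtp (tens K P) (tens K Q) (idtens (rk K) f).
Proof.
move=> oddK [H [oddH ->]]; exists (grading K *t H); split.
  move=> k l; case: (mxtens_indexP k) => i j; case: (mxtens_indexP l) => i' j'.
  rewrite !par_tens tensmxE !mxE.
  have [<- /addbI parQP|_ _] := eqVneq i i'; last by rewrite mulr0n mul0r.
  by rewrite oddH ?mulr0.
rewrite idtens_tensmx !dif_tens mulmxDl mulmxDr !tensmx_mul !mulmx1 !mul1mx.
rewrite addrACA -tensmxDl -tensmxDr [X in X *t H]addrC oddK tens0mx add0r.
by rewrite grading_sqr.
Qed.

Lemma mx2_add a b c d a' b' c' d' :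
  mx2 a b c d + mx2 a' b' c' d' = mx2 (a + a') (b + b') (c + c') (d + d').
Proof. by apply/matrixP => i j; rewrite !mxE; case: ifP; case: ifP. Qed.

Lemma mx2_mul a b c d a' b' c' d' :
  mx2 a b c d *m mx2 a' b' c' d'
  = mx2 (a * a' + b * c') (a * b' + b * d') (c * a' + d * c') (c * b' + d * d').
Proof.
apply/matrixP => i j; rewrite !mxE big_ord_recl big_ord1 !mxE.
by case: i => [[|[|//]] ?]; case: j => [[|[|//]] ?].
Qed.

Section BlockProducts.
Variables (S : pzSemiRingType) (m1 m2 n1 n2 k1 k2 : nat).

Lemma mul_block_diag (A : 'M[S]_(m1, n1)) (B : 'M_(m2, n2)) (C : 'M_(n1, k1))
    (D : 'M_(n2, k2)) :
  block_mx A 0 0 B *m block_mx C 0 0 D = block_mx (A *m C) 0 0 (B *m D).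
Proof. by rewrite mulmx_block !mulmx0 !mul0mx !addr0 !add0r. Qed.

Lemma mul_block_antidiag (A : 'M[S]_(m1, n2)) (B : 'M_(m2, n1)) (C : 'M_(n1, k2))
    (D : 'M_(n2, k1)) :
  block_mx 0 A B 0 *m block_mx 0 C D 0 = block_mx (A *m D) 0 0 (B *m C).
Proof. by rewrite mulmx_block !mulmx0 !mul0mx !addr0 !add0r. Qed.

End BlockProducts.

Lemma pmorM N (E O E' O' : 'M[Rp]_2) :
  pmor N E O *m pmor N E' O' = pmor N (E *m E') (O *m O').
Proof. by rewrite /pmor /bc -map_mxM (mul_block_diag E O E' O'). Qed.

Lemma pmf_nullhtp N (H1 H2 P Q P' Q' E O : 'M[Rp]_2) :
  E = P' *m H2 + H1 *m Q -> O = Q' *m H1 + H2 *m P ->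
  nullhtp (pmf N P Q) (pmf N P' Q') (pmor N E O).
Proof.
move=> defE defO; exists (bc N (block_mx 0 H1 H2 0)); split.
  move=> i j; rewrite /= mxE.
  rewrite -(@splitK 2 2 i) -(@splitK 2 2 j).
  case: (@split 2 2 i) => a; case: (@split 2 2 j) => b /=;
    rewrite ?block_mxEul ?block_mxEur ?block_mxEdl ?block_mxEdr ?mxE ?rmorph0 //;
    by rewrite leq_addr leqNgt ltn_ord.
rewrite /pmor /pmf /bc /= -!map_mxM -map_mxD.
rewrite (mul_block_antidiag P' Q' H1 H2) (mul_block_antidiag H1 H2 P Q).
by rewrite (add_block_mx (P' *m H2)) !addr0 -defE -defO.
Qed.

Theorem mainTheorem4 (N : nat) (hN : (1 <= N)%N) :
  nullhtp (gpar N) (ghor N) (Gmor N *m Fmor N).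
Proof.
rewrite /Gmor /Fmor idtens_mul.
apply: nullhtp_idtens; first by apply: tens_odd; apply: kos_odd.
rewrite /Gp_mor /Fp_mor pmorM.
apply: (@pmf_nullhtp N (mx2 0 0 (- (p1 * Cp)) (- p2)) (mx2 q2 0 (- (q1 * Cp)) 0));
  by rewrite !mx2_mul !mx2_add; congr mx2; ring.
Qed.
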